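(* Let $u$ be a fast decreasing distribution on $\mathbb R^D$ (acting on $\mathbb C[\boldsymbol x]$), $\mathcal Q_2\in\mathbb C[\boldsymbol x]$ with $Z(\mathcal Q_2)\cap\operatorname{supp}u=\varnothing$, and $\check u$ a linear functional on $\mathbb C[\boldsymbol x]$ with $\mathcal Q_2\check u=u$; assume $u,\check u$ quasi-definite, and let $R=\langle\check u,P(\boldsymbol x)\chi(\boldsymbol x)^\top\rangle$. Then for every $k\ge1$ $$\check P_{[k]}(\boldsymbol x)=\Theta_*\begin{pmatrix}R_{[0],[0]}&\cdots&R_{[0],[k-1]}&P_{[0]}(\boldsymbol x)\\ \vdots&&\vdots&\vdots\\ R_{[k],[0]}&\cdots&R_{[k],[k-1]}&P_{[k]}(\boldsymbol x)\end{pmatrix},\qquad \check H_{[k]}=\Theta_*\big(R^{[k+1]}\big).$$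
   Context: $D\ge1$, $\boldsymbol x=(x_1,\dots,x_D)^\top$. $[k]=\{\boldsymbol\alpha\in\mathbb Z_+^D:|\boldsymbol\alpha|=k\}$; multi-indices ordered by graded lexicographic order; $\chi(\boldsymbol x)$ the semi-infinite vector of monomials in this order with blocks $\chi_{[k]}$; semi-infinite matrices partitioned in blocks $A_{[k],[l]}\in\mathbb C^{|[k]|\times|[l]|}$, $A^{[k]}$ the truncation to block rows/columns $0,\dots,k-1$. For a linear functional $u$ on $\mathbb C[\boldsymbol x]$ (applied entrywise), $\langle Qu,P\rangle:=\langle u,QP\rangle$; moment matrix $G=\langle u,\chi\chi^\top\rangle$; quasi-definite means $\det G^{[k]}\ne0$ for all $k$, giving $G=S^{-1}HS^{-\top}$ with $S$ block lower unitriangular and $H$ block diagonal with blocks $H_{[k]}$ (quasi-tau matrices); monic orthogonal polynomials $P(\boldsymbol x)=S\chi(\boldsymbol x)$ with blocks $P_{[k]}$. Checked symbols ($\check P_{[k]},\check H_{[k]}$) refer to $\check u$. Last quasi-determinant: for $M=\begin{pmatrix}A&B\\C&D\end{pmatrix}$ with $A$ square invertible (here the last block row and last block column are those displayed last), $\Theta_*(M)=D-CA^{-1}B$. *)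

From HB Require Import structures.
From mathcomp Require Import all_boot all_order all_algebra.
From mathcomp Require Import reals.
From mathcomp Require Import complex.
From mathcomp Require Import mpoly.

Set Implicit Arguments.
Unset Strict Implicit.
Unset Printing Implicit Defensive.

Import Order.TTheory GRing.Theory Num.Theory.
Local Open Scope ring_scope.

Section MultiOP.
Variables (F : fieldType) (D : nat).

Fixpoint lexge (a b : seq nat) : bool :=
  match a, b with
  | x :: a', y :: b' => (y < x)%N || ((x == y) && lexge a' b')
  | _, _ => true
  end.

Definition mons (k : nat) : seq 'X_{1..D} :=
  sort (fun a b : 'X_{1..D} => lexge a b)
    [seq bmnm m | m <- enum {: 'X_{1..D < k.+1}} & mdeg (bmnm m) == k].

Definition bsz (k : nat) : nat := size (mons k).

Fixpoint dimt (n : nat) : nat :=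
  match n with 0 => 0%N | n'.+1 => (dimt n' + bsz n')%N end.

Definition tidx (n : nat) : seq 'X_{1..D} := flatten [seq mons j | j <- iota 0 n].

Definition ti (n : nat) (i : nat) : 'X_{1..D} := nth 0%MM (tidx n) i.

Definition smx := 'X_{1..D} -> 'X_{1..D} -> F.

Definition trunc (A : smx) (n : nat) : 'M[F]_(dimt n) :=
  \matrix_(i, j) A (ti n i) (ti n j).

Definition blk (A : smx) (k : nat) : 'M[F]_(bsz k) :=
  \matrix_(i, j) A (nth 0%MM (mons k) i) (nth 0%MM (mons k) j).

Definition block_lower_unitriangular (S : smx) : Prop :=
  (forall a b : 'X_{1..D}, (mdeg a < mdeg b)%N -> S a b = 0) /\
  (forall a b : 'X_{1..D}, mdeg a = mdeg b -> S a b = (a == b)%:R).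

Definition block_diagonal (H : smx) : Prop :=
  forall a b : 'X_{1..D}, mdeg a <> mdeg b -> H a b = 0.

Definition moment (u : {mpoly F[D]} -> F) : smx :=
  fun a b => u ('X_[a] * 'X_[b]).

Definition quasi_definite (u : {mpoly F[D]} -> F) : Prop :=
  forall n, \det (trunc (moment u) n) != 0.

Definition LDU_factorization (G S H : smx) : Prop :=
  [/\ block_lower_unitriangular S, block_diagonal H &
      forall n, trunc G n = invmx (trunc S n) *m trunc H n *m (invmx (trunc S n))^T].

Definition OP (S : smx) (a : 'X_{1..D}) : {mpoly F[D]} :=
  \sum_(b : 'X_{1..D < (mdeg a).+1}) (S a (bmnm b))%:MP * 'X_[bmnm b].

Definition OPblk (S : smx) (k : nat) : 'cV[{mpoly F[D]}]_(bsz k) :=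
  \col_i OP S (nth 0%MM (mons k) i).

Definition Rmat (uc : {mpoly F[D]} -> F) (S : smx) : smx :=
  fun a b => uc (OP S a * 'X_[b]).

End MultiOP.

(* last quasi-determinant Theta_*(M) = D - C A^{-1} B for
   M = [[A, B], [C, D]] with A square (m x m) *)
Definition qdet (T : comUnitRingType) (m n q : nat) (M : 'M[T]_(m + n, m + q))
  : 'M[T]_(n, q) :=
  drsubmx M - dlsubmx M *m invmx (ulsubmx M) *m ursubmx M.

(* the matrix ( R_{[i],[j]} (j < k) | P_{[i]}(x) ), i = 0..k, over C[x] *)
Definition RPmat (F : fieldType) (D : nat) (R S : smx F D) (k : nat)
  : 'M[{mpoly F[D]}]_(dimt D k + bsz D k, dimt D k + 1) :=
  \matrix_(i, j)
    match split j with
    | inl j' => (R (ti D k.+1 i) (ti D k j'))%:MP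
    | inr _ => OP S (ti D k.+1 i)
    end.

From HB Require Import structures.
From mathcomp Require Import all_boot all_order all_algebra.
From mathcomp Require Import reals.
From mathcomp Require Import complex.
From mathcomp Require Import mpoly.
Import Order.TTheory GRing.Theory Num.Theory.
Local Open Scope ring_scope.
Set Implicit Arguments.
Unset Strict Implicit.
Unset Printing Implicit Defensive.

(* Write G for the moment matrix of uc. Since P = S chi with S block lower
   unitriangular, every truncation of R = <uc, P chi^T> factors as
   R^[n] = S^[n] G^[n], and the matrix (R | P) of the theorem is S^[k+1] times
   (G | chi). A last quasi-determinant is unchanged by left multiplication with
   a block lower triangular matrix whose last diagonal block is the identity, so
   both quasi-determinants reduce to Schur complements in G. Comparing the last
   block rows of Sc G Sc^T = Hc shows that the last block row of Sc^[k+1] is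
   -G_[k],* (G^[k])^-1 and that Hc_[k] is the Schur complement of G^[k] in
   G^[k+1], which gives both formulas. *)

Section LowerBlockUnitriangular.
Variable T : comUnitRingType.

Lemma invmx_mul n (A B : 'M[T]_n) :
  A \in unitmx -> B \in unitmx -> invmx (A *m B) = invmx B *m invmx A.
Proof.
move=> uA uB; have uAB : A *m B \in unitmx by rewrite unitmx_mul uA uB.
have AB_inv : (A *m B) *m (invmx B *m invmx A) = 1%:M.
  by rewrite mulmxA mulmxK // mulmxV.
by rewrite -[LHS]mulmx1 -AB_inv mulmxA mulVmx // mul1mx.
Qed.

Lemma qdet_mul_lblock m n q (A : 'M[T]_m) (C : 'M[T]_(n, m))
    (M : 'M[T]_(m + n, m + q)) :
  A \in unitmx -> ulsubmx M \in unitmx ->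
  qdet (block_mx A 0 C 1%:M *m M) = qdet M.
Proof.
move=> uA uM; rewrite /qdet -[M]submxK mulmx_block !block_mxKul !block_mxKur
  !block_mxKdl !block_mxKdr !mul0mx !mul1mx !addr0 invmx_mul // !mulmxDl.
have cancelA P : P *m (invmx (ulsubmx M) *m invmx A) *m (A *m ursubmx M)
    = P *m invmx (ulsubmx M) *m ursubmx M by rewrite !mulmxA mulmxKV.
by rewrite !cancelA mulmxK // opprD addrACA subrr add0r.
Qed.

Lemma lblock_congr_diag m n (A : 'M[T]_m) (C : 'M[T]_(n, m)) (G : 'M[T]_(m + n))
    Hu Hd :
  A \in unitmx -> ulsubmx G \in unitmx ->
  block_mx A 0 C 1%:M *m G *m (block_mx A 0 C 1%:M)^T = block_mx Hu 0 0 Hd ->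
  C = - (dlsubmx G *m invmx (ulsubmx G)) /\ Hd = qdet G.
Proof.
move=> uA uG; rewrite -{1}[G]submxK tr_block_mx !mulmx_block.
rewrite !trmx0 !trmx1 !mul0mx !mulmx0 ?mulmx1 ?mul1mx ?addr0 ?add0r.
move=> /eq_block_mx [_ _ dl_eq dr_eq].
have Cdl : C *m ulsubmx G + dlsubmx G = 0.
  have := congr1 (mulmx^~ (invmx A^T)) dl_eq.
  by rewrite mul0mx -mulmxA mulmxV ?unitmx_tr // mulmx1.
have C_eq : C = - (dlsubmx G *m invmx (ulsubmx G)).
  have CG : C *m ulsubmx G = - dlsubmx G by apply/eqP; rewrite -addr_eq0 Cdl.
  by rewrite -mulNmx -CG mulmxK.
split=> //; rewrite -dr_eq Cdl mul0mx add0r /qdet C_eq mulNmx addrC.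
by rewrite -!mulmxA.
Qed.

End LowerBlockUnitriangular.

Section MultiIndices.
Variable D : nat.

Lemma mem_mons k (c : 'X_{1..D}) : (c \in mons D k) = (mdeg c == k).
Proof.
rewrite /mons mem_sort; apply/mapP/idP.
  by case=> m; rewrite mem_filter => /andP[/eqP deg_m _] ->; rewrite deg_m.
move=> /eqP deg_c; have lt_c : (mdeg c < k.+1)%N by rewrite deg_c.
by exists (BMultinom lt_c); rewrite // mem_filter /= deg_c eqxx mem_enum.
Qed.

Lemma uniq_mons k : uniq (mons D k).
Proof.
by rewrite /mons sort_uniq (map_inj_uniq val_inj) filter_uniq ?enum_uniq.
Qed.

Lemma mdeg_mons k (i : 'I_(bsz D k)) : mdeg (nth 0%MM (mons D k) i) = k.
Proof. by apply/eqP; rewrite -mem_mons mem_nth. Qed.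

Lemma tidxS n : tidx D n.+1 = tidx D n ++ mons D n.
Proof. by rewrite /tidx -addn1 iotaD map_cat flatten_cat /= cats0. Qed.

Lemma mem_tidx n (c : 'X_{1..D}) : (c \in tidx D n) = (mdeg c < n)%N.
Proof.
elim: n => [|n IHn]; first by rewrite ltn0.
by rewrite tidxS mem_cat IHn mem_mons ltnS [RHS]leq_eqVlt orbC.
Qed.

Lemma uniq_tidx n : uniq (tidx D n).
Proof.
elim: n => [//|n IHn]; rewrite tidxS cat_uniq IHn uniq_mons andbT /=.
by apply/hasPn => c; rewrite mem_mons mem_tidx => /eqP ->; rewrite ltnn.
Qed.

Lemma size_tidx n : size (tidx D n) = dimt D n.
Proof. by elim: n => [//|n IHn]; rewrite tidxS size_cat IHn. Qed.

Lemma mdeg_ti n (i : 'I_(dimt D n)) : (mdeg (ti D n i) < n)%N.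
Proof. by rewrite -mem_tidx mem_nth // size_tidx. Qed.

Lemma ti_lshift n (i : 'I_(dimt D n)) : ti D n.+1 (lshift (bsz D n) i) = ti D n i.
Proof. by rewrite /ti tidxS nth_cat size_tidx /= ltn_ord. Qed.

Lemma ti_rshift n (i : 'I_(bsz D n)) :
  ti D n.+1 (rshift (dimt D n) i) = nth 0%MM (mons D n) i.
Proof. by rewrite /ti tidxS nth_cat size_tidx /= ltnNge leq_addr /= addKn. Qed.

Lemma big_bmnm_tidx (V : nmodType) n (f : 'X_{1..D} -> V) :
  \sum_(b : 'X_{1..D < n}) f (bmnm b) = \sum_(i < dimt D n) f (ti D n i).
Proof.
transitivity (\sum_(c <- tidx D n) f c); last first.
  by rewrite (big_nth 0%MM) size_tidx big_mkord.
rewrite -big_enum -(big_map (@bmnm D n) xpredT f); apply/perm_big/uniq_perm.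
- by rewrite (map_inj_uniq val_inj) enum_uniq.
- exact: uniq_tidx.
move=> c; rewrite mem_tidx; apply/mapP/idP => [[b _ ->]|lt_c]; first exact: bmdeg.
by exists (BMultinom lt_c); rewrite ?mem_enum.
Qed.

Lemma big_ti_vanishing (V : nmodType) m n (f : 'X_{1..D} -> V) :
  (m <= n)%N -> (forall c, (m <= mdeg c)%N -> f c = 0) ->
  \sum_(i < dimt D n) f (ti D n i) = \sum_(i < dimt D m) f (ti D m i).
Proof.
move=> + f0; elim: n => [|n IHn]; first by rewrite leqn0 => /eqP ->.
rewrite leq_eqVlt ltnS => /predU1P[-> //|le_mn].
rewrite big_split_ord /= [X in _ + X]big1 => [|i _]; last first.
  by rewrite ti_rshift f0 ?mdeg_mons.
by rewrite addr0 -IHn //; apply: eq_bigr => i _; rewrite ti_lshift.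
Qed.

End MultiIndices.

Section Truncations.
Variables (F : fieldType) (D : nat).
Implicit Types (X S H : smx F D) (u : {mpoly F[D]} -> F).

Definition blk_row X n : 'M[F]_(bsz D n, dimt D n) :=
  \matrix_(i, j) X (nth 0%MM (mons D n) i) (ti D n j).

Definition blk_col X n : 'M[F]_(dimt D n, bsz D n) :=
  \matrix_(i, j) X (ti D n i) (nth 0%MM (mons D n) j).

Lemma truncS X n : trunc X n.+1 =
  block_mx (trunc X n) (blk_col X n) (blk_row X n) (blk X n) :> 'M_(_ + _).
Proof.
by rewrite -[LHS]submxK; congr block_mx; apply/matrixP => i j;
  rewrite !mxE ?ti_lshift ?ti_rshift.
Qed.

Lemma truncS_lunitri S n : block_lower_unitriangular S ->
  trunc S n.+1 = block_mx (trunc S n) 0 (blk_row S n) 1%:M :> 'M_(_ + _).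
Proof.
case=> S_lt S_eq; rewrite truncS; congr block_mx; apply/matrixP => i j.
  by rewrite !mxE S_lt // mdeg_mons mdeg_ti.
by rewrite !mxE S_eq ?mdeg_mons // nth_uniq ?uniq_mons.
Qed.

Lemma truncS_bdiag H n : block_diagonal H ->
  trunc H n.+1 = block_mx (trunc H n) 0 0 (blk H n) :> 'M_(_ + _).
Proof.
move=> H_bd; rewrite truncS; congr block_mx; apply/matrixP => i j;
  rewrite !mxE H_bd // mdeg_mons => deg_eq.
  by have := mdeg_ti i; rewrite deg_eq ltnn.
by have := mdeg_ti j; rewrite -deg_eq ltnn.
Qed.

Lemma det_trunc_lunitri S n : block_lower_unitriangular S -> \det (trunc S n) = 1.
Proof.
move=> S_lu; elim: n => [|n IHn]; first by rewrite det_mx00.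
by rewrite truncS_lunitri // det_lblock IHn det1 mulr1.
Qed.

Lemma unitmx_trunc_lunitri S n : block_lower_unitriangular S -> trunc S n \in unitmx.
Proof. by move=> S_lu; rewrite unitmxE det_trunc_lunitri ?unitr1. Qed.

Lemma unitmx_trunc_moment u n : quasi_definite u -> trunc (moment u) n \in unitmx.
Proof. by move=> u_qd; rewrite unitmxE unitfE. Qed.

End Truncations.

Section OrthogonalPolynomials.
Variables (F : fieldType) (D : nat).
Implicit Types (S Sc Hc : smx F D) (uc : {scalar {mpoly F[D]}}).
Local Notation mxC := (map_mx (@mpolyC D F)).

Lemma OP_trunc S a n : block_lower_unitriangular S -> (mdeg a < n)%N ->
  OP S a = \sum_(i < dimt D n) (S a (ti D n i))%:MP * 'X_[ti D n i].
Proof.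
case=> S_lt _ lt_a; pose f c := (S a c)%:MP * 'X_[c].
rewrite /OP (big_bmnm_tidx _ f) -(big_ti_vanishing (f := f) lt_a) // => c le_c.
by rewrite /f S_lt ?mpolyC0 ?mul0r.
Qed.

Lemma Rmat_expand uc S a b n : block_lower_unitriangular S -> (mdeg a < n)%N ->
  Rmat uc S a b = \sum_(l < dimt D n) S a (ti D n l) * moment uc (ti D n l) b.
Proof.
move=> S_lu lt_a; rewrite /Rmat (OP_trunc S_lu lt_a) mulr_suml linear_sum.
by apply: eq_bigr => l _; rewrite -mulrA mul_mpolyC linearZ.
Qed.

Lemma trunc_Rmat uc S n : block_lower_unitriangular S ->
  trunc (Rmat uc S) n = trunc S n *m trunc (moment uc) n.
Proof.
move=> S_lu; apply/matrixP => i j; rewrite !mxE (Rmat_expand _ _ S_lu (mdeg_ti i)).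
by apply: eq_bigr => l _; rewrite !mxE.
Qed.

Lemma ldu_moment_schur uc Sc Hc k : quasi_definite uc ->
    LDU_factorization (moment uc) Sc Hc ->
  blk_row Sc k = - (blk_row (moment uc) k *m invmx (trunc (moment uc) k)) /\
  blk Hc k = qdet (m := dimt D k) (n := bsz D k) (q := bsz D k)
                  (trunc (moment uc) k.+1).
Proof.
move=> uc_qd [Sc_lu Hc_bd G_eq]; have L_unit := unitmx_trunc_lunitri k.+1 Sc_lu.
have congr_eq : trunc Sc k.+1 *m trunc (moment uc) k.+1 *m (trunc Sc k.+1)^T
    = trunc Hc k.+1.
  by rewrite G_eq !mulmxA mulmxV // mul1mx -mulmxA -trmx_mul mulmxV // trmx1 mulmx1.
move: congr_eq; rewrite (truncS_bdiag k Hc_bd) (truncS_lunitri k Sc_lu).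
case/lblock_congr_diag; rewrite ?unitmx_trunc_lunitri //.
  by rewrite truncS block_mxKul unitmx_trunc_moment.
by move=> -> ->; rewrite truncS block_mxKdl block_mxKul.
Qed.

Lemma blk_qdet_Rmat uc S Sc Hc k : block_lower_unitriangular S ->
    quasi_definite uc -> LDU_factorization (moment uc) Sc Hc ->
  blk Hc k = qdet (m := dimt D k) (n := bsz D k) (q := bsz D k)
                  (trunc (Rmat uc S) k.+1).
Proof.
move=> S_lu uc_qd ldu; rewrite trunc_Rmat // (truncS_lunitri k S_lu) qdet_mul_lblock.
- by have [_ ->] := ldu_moment_schur k uc_qd ldu.
- exact: unitmx_trunc_lunitri.
- by rewrite truncS block_mxKul unitmx_trunc_moment.
Qed.

Definition monomial_col n : 'cV[{mpoly F[D]}]_(dimt D n) := \col_i 'X_[ti D n i].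

Definition monomial_blk n : 'cV[{mpoly F[D]}]_(bsz D n) :=
  \col_i 'X_[nth 0%MM (mons D n) i].

Lemma OPblk_expand S k : block_lower_unitriangular S ->
  OPblk S k = mxC (blk_row S k) *m monomial_col k + monomial_blk k.
Proof.
move=> S_lu; apply/matrixP => i j; rewrite !mxE.
rewrite (@OP_trunc _ _ k.+1) ?mdeg_mons // big_split_ord /=; congr (_ + _).
  by apply: eq_bigr => l _; rewrite !mxE !ti_lshift.
under eq_bigr => l _ do
  rewrite ti_rshift (proj2 S_lu) ?mdeg_mons // nth_uniq ?uniq_mons //.
rewrite (bigD1 i) //= eqxx mpolyC1 mul1r big1 ?addr0 // => l ne_li.
have ne_li_val : (l == i :> nat) = false by exact: negPf ne_li.
by rewrite eq_sym ne_li_val mpolyC0 mul0r.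
Qed.

Definition moment_chi_mx uc k
    : 'M[{mpoly F[D]}]_(dimt D k + bsz D k, dimt D k + 1) :=
  \matrix_(i, j) match split j with
    | inl j' => (moment uc (ti D k.+1 i) (ti D k j'))%:MP
    | inr _ => 'X_[ti D k.+1 i]
    end.

Lemma moment_chi_mx_block uc k : moment_chi_mx uc k =
  block_mx (mxC (trunc (moment uc) k)) (monomial_col k)
           (mxC (blk_row (moment uc) k)) (monomial_blk k).
Proof.
rewrite -[LHS]submxK; congr block_mx; apply/matrixP => i j;
  by rewrite !mxE ?(unsplitK (inl _)) ?(unsplitK (inr _)) ?ti_lshift ?ti_rshift.
Qed.

Lemma RPmat_Rmat uc S k : block_lower_unitriangular S ->
  RPmat (Rmat uc S) S k = mxC (trunc S k.+1) *m moment_chi_mx uc k.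
Proof.
move=> S_lu; apply/matrixP => i j; rewrite !mxE; under eq_bigr => l _ do rewrite !mxE.
have lt_i := mdeg_ti (i : 'I_(dimt D k.+1)).
case: (split j) => j' /=; last exact: OP_trunc S_lu lt_i.
rewrite (Rmat_expand _ _ S_lu lt_i) rmorph_sum.
by apply: eq_bigr => l _; rewrite rmorphM.
Qed.

Lemma OPblk_qdet_RPmat uc S Sc Hc k : block_lower_unitriangular S ->
    quasi_definite uc -> LDU_factorization (moment uc) Sc Hc ->
  OPblk Sc k = qdet (RPmat (Rmat uc S) S k).
Proof.
move=> S_lu uc_qd ldu; have [Sc_row _] := ldu_moment_schur k uc_qd ldu.
rewrite RPmat_Rmat // (truncS_lunitri k S_lu) map_block_mx map_mx0 map_mx1.
rewrite qdet_mul_lblock ?map_unitmx ?unitmx_trunc_lunitri //; last first.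
  by rewrite moment_chi_mx_block block_mxKul map_unitmx unitmx_trunc_moment.
rewrite moment_chi_mx_block /qdet block_mxKul block_mxKur block_mxKdl block_mxKdr.
rewrite OPblk_expand; last by case: ldu.
by rewrite Sc_row map_mxN map_mxM map_invmx mulNmx addrC.
Qed.

End OrthogonalPolynomials.

Theorem mainTheorem3 (R : realType) (D : nat) (hD : (0 < D)%N)
  (u uc : {scalar {mpoly R[i][D]}}) (Q2 : {mpoly R[i][D]})
  (S H Sc Hc : smx R[i] D) :
  (* Q2 uc = u, i.e. <uc, Q2 p> = <u, p> for every polynomial p *)
  (forall p : {mpoly R[i][D]}, uc (Q2 * p) = u p) ->
  quasi_definite u -> quasi_definite uc ->
  (* G = S^{-1} H S^{-T} and Gc = Sc^{-1} Hc Sc^{-T} *)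
  LDU_factorization (moment u) S H ->
  LDU_factorization (moment uc) Sc Hc ->
  forall k : nat, (0 < k)%N ->
    OPblk Sc k = qdet (RPmat (Rmat uc S) S k) /\
    blk Hc k = qdet (m := dimt D k) (n := bsz D k) (q := bsz D k)
                    (trunc (Rmat uc S) k.+1).
Proof.
move=> _ _ uc_qd [S_lu _ _] ldu k _; split.
- exact: OPblk_qdet_RPmat S_lu uc_qd ldu.
- exact: blk_qdet_Rmat S_lu uc_qd ldu.
Qed.
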